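(* Let $\lambda$ be a generic normalized additively alternating $n\times n$ complex matrix with biresidue matrix $b$, and let $I\subseteq\{0,\dots,n-2\}$ be such that $\{i,i+1\}$ is a smoothable edge of $b$ for every $i\in I$. Then no linear combination $\sum_{i\in I}\nu_i\boldsymbol\theta_i$ with all $\nu_i\in\mathbb{Z}_{\ge0}$ is an obstructed weight.
   Context: Additively alternating: $\lambda_{ji}=-\lambda_{ij}$; normalized: rows sum to $0$. $\lambda$ is generic if it has rank $n-1$ and every relevant $\operatorname{EExp}(\lambda)$-Hochschild-contributing weight is $\lambda$-Poisson-contributing, where $\operatorname{EExp}(\lambda)=(e^{\lambda_{ij}})$; a weight $\mathbf w\in\mathbb{Z}^n$ is relevant if $w_i\ge-1$, $\sum w_i=0$; $q$-Hochschild-contributing if $w_i\ge-1$ for all $i$ and $\prod_jq_{ij}^{w_j}=1$ whenever $w_i\ge0$; $\lambda$-Poisson-contributing if $w_i\ge-1$ for all $i$ and $\sum_j\lambda_{ij}w_j=0$ whenever $w_i\ge0$. The biresidue matrix is the unique normalized alternating $b$ with $b|_\Delta=(\lambda|_\Delta)^{-1}$, $\Delta=\{z\in\mathbb{C}^n:\sum z_i=0\}$. The edge $\{i,j\}$ is smoothable if $b_{ij}\ne0$ and $(b_{jk}+b_{ki})/b_{ij}\in\mathbb{Z}_{\ge0}$ for $k\ne i,j$; its smoothable weight has entries $-1$ at $i,j$ and $(b_{jk}+b_{ki})/b_{ij}$ at $k\ne i,j$; $\boldsymbol\theta_i$ denotes the smoothable weight of $\{i,i+1\}$. A weight $\mathbf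 w\in\mathbb{Z}^n$ is obstructed if there are three distinct indices $i,j,k$ with $w_i=w_j=w_k=-1$, $w_\ell\ge0$ for all $\ell\ne i,j,k$, and $\mathbf w$ is a complex linear combination of the rows $b_{i\bullet},b_{j\bullet},b_{k\bullet}$. *)

From HB Require Import structures.
From mathcomp Require Import all_boot all_order all_algebra.
From mathcomp Require Import reals sequences exp trigo.
From mathcomp Require Import complex.
Set Implicit Arguments. Unset Strict Implicit. Unset Printing Implicit Defensive.
Import Order.TTheory GRing.Theory Num.Theory.
Local Open Scope ring_scope.

Definition cexp (R : realType) (z : R[i]) : R[i] :=
  Complex (expR (complex.Re z) * cos (complex.Im z))
          (expR (complex.Re z) * sin (complex.Im z)).

Section Defs.
Variable R : realType.
Local Notation C := (R[i]).
Variable n : nat.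

Definition add_alternating (A : 'M[C]_n) : Prop :=
  forall i j, A j i = - A i j.

Definition normalized (A : 'M[C]_n) : Prop :=
  forall i, \sum_j A i j = 0.

Definition EExp (A : 'M[C]_n) : 'M[C]_n := \matrix_(i, j) cexp (A i j).

Definition relevant (w : 'I_n -> int) : Prop :=
  (forall i, -1 <= w i) /\ \sum_i w i = 0.

Definition hochschild_contributing (q : 'M[C]_n) (w : 'I_n -> int) : Prop :=
  (forall i, -1 <= w i) /\
  (forall i, 0 <= w i -> \prod_j (q i j) ^ (w j) = 1).

Definition poisson_contributing (A : 'M[C]_n) (w : 'I_n -> int) : Prop :=
  (forall i, -1 <= w i) /\
  (forall i, 0 <= w i -> \sum_j A i j * (w j)%:~R = 0).

Definition generic (A : 'M[C]_n) : Prop :=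
  \rank A = n.-1 /\
  (forall w, relevant w -> hochschild_contributing (EExp A) w ->
             poisson_contributing A w).

Definition in_Delta (z : 'cV[C]_n) : Prop := \sum_i z i 0 = 0.

(* b is the biresidue matrix of lambda: the (unique) normalized alternating
   matrix whose restriction to Delta is the inverse of lambda restricted to
   Delta (lambda maps Delta isomorphically onto Delta when lambda is
   normalized alternating of rank n-1). *)
Definition biresidue_of (A b : 'M[C]_n) : Prop :=
  normalized b /\ add_alternating b /\
  (forall z : 'cV[C]_n, in_Delta z -> b *m (A *m z) = z /\ A *m (b *m z) = z).

Definition smoothable (b : 'M[C]_n) (i j : 'I_n) : Prop :=
  b i j != 0 /\
  forall k, k != i -> k != j -> exists m : nat, (b j k + b k i) / b i j = m%:R.

Definition smoothable_weight (b : 'M[C]_n) (i j : 'I_n) (k : 'I_n) : C :=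
  if (k == i) || (k == j) then -1 else (b j k + b k i) / b i j.

Definition obstructed (b : 'M[C]_n) (w : 'I_n -> int) : Prop :=
  exists i j k : 'I_n,
    [/\ i != j, j != k & i != k] /\
    [/\ w i = -1, w j = -1 & w k = -1] /\
    (forall l, l != i -> l != j -> l != k -> 0 <= w l) /\
    exists c1 c2 c3 : C,
      forall l, (w l)%:~R = c1 * b i l + c2 * b j l + c3 * b k l.

End Defs.

Lemma ord_succ_proof n (i : 'I_n.-1) : (i.+1 < n)%N.
Proof. by case: i => i /=; case: n => [|n] //=; rewrite ltnS. Qed.

Definition ord_lo n (i : 'I_n.-1) : 'I_n := widen_ord (leq_pred n) i.
Definition ord_hi n (i : 'I_n.-1) : 'I_n := Ordinal (ord_succ_proof i).

Definition theta (R : realType) n (b : 'M[R[i]]_n) (i : 'I_n.-1) : 'I_n -> R[i] :=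
  smoothable_weight b (ord_lo i) (ord_hi i).

From HB Require Import structures.
From mathcomp Require Import all_boot all_order all_algebra.
From mathcomp Require Import reals sequences exp trigo.
From mathcomp Require Import complex.
From mathcomp Require Import ring zify.

Set Implicit Arguments.
Unset Strict Implicit.
Unset Printing Implicit Defensive.

Import Order.TTheory GRing.Theory Num.Theory.
Local Open Scope ring_scope.

(** Since b is alternating, theta_m = b (e_m - e_(m+1)) / b_(m,m+1), so the weight
    w = sum_m nu_m theta_m equals b y for the chain y = sum_m x_m (e_m - e_(m+1)),
    x_m = nu_m / b_(m,m+1), which has coordinate sum 0.  If w were obstructed at
    i, j, k, then b (y + z) = 0 for some z supported on {i, j, k}; as b kills
    constants and is injective on Delta, y + z is constant, and the alternating form
    y^T b y = sum_l y_l w_l = 0 forces that constant to vanish, so y is supported on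
    {i, j, k}.  Order them i < j < k and cut the chain at j: each half is a sum-zero
    vector on two points, where b takes equal values, and is nonnegative at the third
    point because theta_m >= 0 off {m, m+1}.  Hence w_j <= w_i + w_k, which fails
    when all three equal -1. *)

Definition mxv (F : pzRingType) n (A : 'M[F]_n) (y : 'I_n -> F) (l : 'I_n) : F :=
  \sum_p A l p * y p.

Lemma mxvD (F : pzRingType) n (A : 'M[F]_n) (y z : 'I_n -> F) l :
  mxv A (fun p => y p + z p) l = mxv A y l + mxv A z l.
Proof. by rewrite /mxv -big_split; apply: eq_bigr => p _; rewrite mulrDr. Qed.

Lemma sum_delta_mul (F : pzSemiRingType) n (G : 'I_n -> F) q :
  \sum_p (p == q)%:R * G p = G q.
Proof.
rewrite (bigD1 q) //= eqxx mul1r big1 ?addr0 // => p /negbTE ->.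
exact: mul0r.
Qed.

Lemma sum_delta (F : pzSemiRingType) n q : \sum_(p : 'I_n) (p == q)%:R = 1 :> F.
Proof. by rewrite (bigD1 q) //= eqxx big1 ?addr0 // => p /negbTE ->. Qed.

Lemma ord_sort3 n (P : 'I_n -> 'I_n -> 'I_n -> Prop) :
  (forall i j k, P i j k -> P j i k) -> (forall i j k, P i j k -> P i k j) ->
  forall i j k, i != j -> j != k -> i != k -> P i j k ->
  exists a m c : 'I_n, (a < m < c)%N /\ P a m c.
Proof.
move=> P12 P23 i j k; rewrite -!(inj_eq val_inj) /= !neq_ltn.
move=> /orP[] ij /orP[] jk /orP[] ik Pijk; try (exfalso; lia).
- by exists i, j, k; rewrite ij jk.
- by exists i, k, j; rewrite ik; split; [lia | exact: P23].
- by exists k, i, j; split; [lia | exact/P12/P23].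
- by exists j, i, k; split; [lia | exact: P12].
- by exists j, k, i; split; [lia | exact/P23/P12].
- by exists k, j, i; split; [lia | exact/P12/P23/P12].
Qed.

Section AlternatingMatrix.
Variables (F : numDomainType) (n : nat) (b : 'M[F]_n).
Hypothesis b_alt : forall i j, b j i = - b i j.

Lemma alt_diag i : b i i = 0.
Proof.
have : b i i *+ 2 = 0 by rewrite mulr2n {1}b_alt addNr.
by move/eqP; rewrite mulrn_eq0 => /eqP.
Qed.

Lemma alt_form_eq0 y : \sum_l y l * mxv b y l = 0.
Proof.
set X := \sum_l _; have : X = - X.
  rewrite /X /mxv; under eq_bigr do rewrite mulr_sumr.
  rewrite [LHS]exchange_big -sumrN; apply: eq_bigr => p _.
  rewrite -sumrN; apply: eq_bigr => l _.
  by rewrite (b_alt p l); ring.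
by move/eqP; rewrite -addr_eq0 -mulr2n mulrn_eq0 => /eqP.
Qed.

Lemma mxv_two_point y p1 p2 : p1 != p2 ->
  (forall p, p != p1 -> p != p2 -> y p = 0) -> \sum_p y p = 0 ->
  mxv b y p1 = mxv b y p2.
Proof.
move=> p12 y_supp y_sum.
have sum2 (G : 'I_n -> F) : (forall p, p != p1 -> p != p2 -> G p = 0) ->
    \sum_p G p = G p1 + G p2.
  move=> G_supp; rewrite (bigD1 p1) // (bigD1 p2) 1?eq_sym //= big1 ?addr0 //.
  by move=> p /andP[]; exact: G_supp.
have y2 : y p2 = - y p1.
  by apply/eqP; rewrite -addr_eq0 addrC -(sum2 _ y_supp) y_sum.
rewrite /mxv !sum2 => [|p *|p *]; try by rewrite y_supp ?mulr0.
by rewrite !alt_diag y2 (b_alt p1 p2); ring.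
Qed.

Hypothesis b_norm : forall i, \sum_j b i j = 0.

Lemma sum_mxv_eq0 y : \sum_l mxv b y l = 0.
Proof.
rewrite /mxv exchange_big big1 // => p _.
by rewrite -mulr_suml (eq_bigr _ (fun l _ => b_alt p l)) sumrN b_norm oppr0 mul0r.
Qed.

End AlternatingMatrix.

Section AlternatingKernel.
Variables (F : numFieldType) (n : nat) (b : 'M[F]_n).
Hypothesis b_alt : forall i j, b j i = - b i j.
Hypothesis b_norm : forall i, \sum_j b i j = 0.
Hypothesis b_inj : forall y, \sum_p y p = 0 -> (forall l, mxv b y l = 0) ->
  forall p, y p = 0.

Lemma mxv_eq0_const q l :
  (forall p, mxv b q p = 0) -> q l = (\sum_p q p) / n%:R.
Proof.
move=> bq0; set s := (\sum_p q p) / n%:R.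
have n_neq0 : n%:R != 0 :> F.
  by rewrite pnatr_eq0 -lt0n (leq_ltn_trans _ (ltn_ord l)).
have centered_sum : \sum_p (q p - s) = 0.
  by rewrite sumrB sumr_const card_ord -mulr_natr divfK ?subrr.
have centered_ker p : mxv b (fun i => q i - s) p = 0.
  rewrite /mxv; under eq_bigr do rewrite mulrBr.
  by rewrite sumrB -mulr_suml b_norm mul0r subr0; exact: bq0.
by apply/eqP; rewrite -subr_eq0; apply/eqP; exact: b_inj centered_sum centered_ker l.
Qed.

Lemma rows3_preimage_support y i j k (c1 c2 c3 : F) :
  \sum_p y p = 0 ->
  (forall l, mxv b y l = c1 * b i l + c2 * b j l + c3 * b k l) ->
  mxv b y i = -1 -> mxv b y j = -1 -> mxv b y k = -1 ->
  forall l, l != i -> l != j -> l != k -> y l = 0.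
Proof.
move=> y_sum y_rows yi yj yk.
pose z l : F := (l == i)%:R * c1 + (l == j)%:R * c2 + (l == k)%:R * c3.
have sum_zM G : \sum_l z l * G l = c1 * G i + c2 * G j + c3 * G k.
  by under eq_bigr do rewrite !mulrDl -!mulrA; rewrite !big_split !sum_delta_mul.
have sum_z : \sum_l z l = c1 + c2 + c3.
  by rewrite /z !big_split /= -!mulr_suml !sum_delta !mul1r.
have mxv_z l : mxv b z l = - (c1 * b i l + c2 * b j l + c3 * b k l).
  rewrite /mxv (eq_bigr _ (fun p _ => mulrC _ _)) sum_zM.
  by rewrite (b_alt i l) (b_alt j l) (b_alt k l) !mulrN -!opprD.
have yz_ker l : mxv b (fun p => y p + z p) l = 0 by rewrite mxvD mxv_z y_rows subrr.
set s := (\sum_p (y p + z p)) / n%:R.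
have y_eq l : y l = s - z l.
  by apply/eqP; rewrite eq_sym subr_eq eq_sym; apply/eqP; exact: mxv_eq0_const.
have c_sum0 : c1 + c2 + c3 = 0.
  have : \sum_l y l * mxv b y l = s * \sum_l mxv b y l - \sum_l z l * mxv b y l.
    by rewrite mulr_sumr -sumrB; apply: eq_bigr => l _; rewrite y_eq mulrBl.
  rewrite (alt_form_eq0 b_alt) (sum_mxv_eq0 b_alt b_norm) mulr0 sub0r.
  by rewrite sum_zM yi yj yk !mulrN1 -!opprD opprK => /esym.
have s0 : s = 0.
  by rewrite /s big_split /= y_sum sum_z c_sum0 addr0 mul0r.
move=> l li lj lk; rewrite y_eq s0 sub0r /z (negbTE li) (negbTE lj) (negbTE lk).
by rewrite !mul0r !addr0 oppr0.
Qed.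

End AlternatingKernel.

Section EdgeChains.
Variables (F : numDomainType) (n : nat) (b : 'M[F]_n).
Implicit Types (J : {set 'I_n.-1}) (x : 'I_n.-1 -> F) (m : 'I_n.-1) (k l p : 'I_n).

Definition edge_vec (m : 'I_n.-1) (p : 'I_n) : F :=
  (p == ord_lo m)%:R - (p == ord_hi m)%:R.

Definition chain (J : {set 'I_n.-1}) (x : 'I_n.-1 -> F) (p : 'I_n) : F :=
  \sum_(m in J) x m * edge_vec m p.

Lemma sum_chain J x : \sum_p chain J x p = 0.
Proof.
rewrite exchange_big big1 // => m _.
by rewrite -mulr_sumr sumrB !sum_delta subrr mulr0.
Qed.

Lemma mxv_chain J x l :
  mxv b (chain J x) l = \sum_(m in J) x m * (b l (ord_lo m) - b l (ord_hi m)).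
Proof.
rewrite /mxv /chain; under eq_bigr do rewrite mulr_sumr.
rewrite exchange_big; apply: eq_bigr => m _.
under eq_bigr do rewrite mulrCA.
rewrite -mulr_sumr; congr (_ * _).
under eq_bigr do rewrite mulrC mulrBl.
by rewrite sumrB !sum_delta_mul.
Qed.

Lemma not_endpoint m p :
  (p < m)%N \/ (m.+1 < p)%N -> p != ord_lo m /\ p != ord_hi m.
Proof. by move=> p_out; split; apply/eqP => /(congr1 val) /=; lia. Qed.

Lemma chain_eq0 J x p :
  (forall m, m \in J -> p != ord_lo m /\ p != ord_hi m) -> chain J x p = 0.
Proof.
move=> p_out; rewrite /chain big1 // => m /p_out[/negbTE lo /negbTE hi].
by rewrite /edge_vec lo hi subrr mulr0.
Qed.

Lemma chain_split J x k p :
  chain J x p =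
  chain [set m in J | (m < k)%N] x p + chain [set m in J | (k <= m)%N] x p.
Proof.
rewrite /chain (bigID (fun m : 'I_n.-1 => (m < k)%N)) /=.
by congr (_ + _); apply: eq_bigl => m; rewrite !inE // -leqNgt.
Qed.

Lemma chain_lt_eq0 J x k p :
  (k < p)%N -> chain [set m in J | (m < k)%N] x p = 0.
Proof.
move=> kp; apply: chain_eq0 => m; rewrite inE => /andP[_ mk].
by apply: not_endpoint; lia.
Qed.

Lemma chain_ge_eq0 J x k p :
  (p < k)%N -> chain [set m in J | (k <= m)%N] x p = 0.
Proof.
move=> pk; apply: chain_eq0 => m; rewrite inE => /andP[_ km].
by apply: not_endpoint; lia.
Qed.

End EdgeChains.

Section ChainInequality.
Variables (F : numDomainType) (n : nat) (b : 'M[F]_n).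
Hypothesis b_alt : forall i j, b j i = - b i j.
Variables (J : {set 'I_n.-1}) (x : 'I_n.-1 -> F).
Implicit Types (K : {set 'I_n.-1}) (m : 'I_n.-1) (l p : 'I_n).
Hypothesis x_pos : forall m l, m \in J -> l != ord_lo m -> l != ord_hi m ->
  0 <= x m * (b l (ord_lo m) - b l (ord_hi m)).

Local Notation W K := (mxv b (chain K x)).

Lemma mxv_chain_ge0 K l : K \subset J ->
  (forall m, m \in K -> l != ord_lo m /\ l != ord_hi m) -> 0 <= W K l.
Proof.
move=> KJ l_out; rewrite mxv_chain; apply: sumr_ge0 => m mK.
by have [lo hi] := l_out m mK; apply: x_pos (subsetP KJ m mK) lo hi.
Qed.

Section ThreePointSupport.
Variables a k c : 'I_n.
Hypothesis akc : (a < k < c)%N.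
Hypothesis J_supp : forall p, p != a -> p != k -> p != c -> chain J x p = 0.

Lemma chain_lt_support p :
  p != a -> p != k -> chain [set m in J | (m < k)%N] x p = 0.
Proof.
move=> pa pk; have [kp | pk'] := ltnP k p; first exact: chain_lt_eq0.
have p_lt_k : (p < k)%N by rewrite ltn_neqAle pk' andbT.
have pc : p != c by apply/eqP => /(congr1 val) /=; lia.
by move: (chain_split J x k p); rewrite J_supp // chain_ge_eq0 // addr0 => <-.
Qed.

Lemma chain_ge_support p :
  p != k -> p != c -> chain [set m in J | (k <= m)%N] x p = 0.
Proof.
move=> pk pc; have [p_lt_k | kp] := ltnP p k; first exact: chain_ge_eq0.
have k_lt_p : (k < p)%N by rewrite ltn_neqAle eq_sym pk kp.
have pa : p != a by apply/eqP => /(congr1 val) /=; lia.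
by move: (chain_split J x k p); rewrite J_supp // chain_lt_eq0 // add0r => <-.
Qed.

Lemma chain_mid_le : W J k <= W J a + W J c.
Proof.
case/andP: akc => ak kc.
set J1 := [set m in J | (m < k)%N]; set J2 := [set m in J | (k <= m)%N].
have W_split l : W J l = W J1 l + W J2 l.
  by rewrite -mxvD; apply: eq_bigr => p _; rewrite (chain_split J x k).
have sub_J P : [set m in J | P m] \subset J.
  by apply/subsetP => m; rewrite inE => /andP[].
have W1_ak : W J1 a = W J1 k.
  by apply: mxv_two_point => //; [apply/eqP => /(congr1 val) /=; lia |
    exact: chain_lt_support | exact: sum_chain].
have W2_kc : W J2 k = W J2 c.
  by apply: mxv_two_point => //; [apply/eqP => /(congr1 val) /=; lia |
    exact: chain_ge_support | exact: sum_chain].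
have W2a_ge0 : 0 <= W J2 a.
  apply: mxv_chain_ge0; first exact: sub_J.
  by move=> m; rewrite inE => /andP[_ km]; apply: not_endpoint; lia.
have W1c_ge0 : 0 <= W J1 c.
  apply: mxv_chain_ge0; first exact: sub_J.
  by move=> m; rewrite inE => /andP[_ mk]; apply: not_endpoint; lia.
rewrite -subr_ge0 (_ : _ - _ = W J2 a + W J1 c) ?addr_ge0 //.
by rewrite !W_split W1_ak -W2_kc; ring.
Qed.

End ThreePointSupport.

Lemma chain_not_three_neg i j k : i != j -> j != k -> i != k ->
  (forall p, p != i -> p != j -> p != k -> chain J x p = 0) ->
  ~ [/\ W J i = -1, W J j = -1 & W J k = -1].
Proof.
move=> ij jk ik supp [Wi Wj Wk].
pose P a mid c := [/\ W J a = -1, W J mid = -1, W J c = -1 &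
  forall p, p != a -> p != mid -> p != c -> chain J x p = 0].
have P_swap12 a mid c : P a mid c -> P mid a c.
  by case=> Wa Wm Wc s; split=> // p pm pa pc; apply: s.
have P_swap23 a mid c : P a mid c -> P a c mid.
  by case=> Wa Wm Wc s; split=> // p pa pc pm; apply: s.
have [a [mid [c [amc [Wa Wm Wc supp_amc]]]]] :=
  ord_sort3 P_swap12 P_swap23 ij jk ik (And4 Wi Wj Wk supp).
have := chain_mid_le amc supp_amc.
by rewrite Wa Wm Wc lerDl ler0N1.
Qed.

End ChainInequality.

Section Biresidue.
Variables (R : realType) (n : nat).
Implicit Types (lam b : 'M[R[i]]_n) (m : 'I_n.-1) (l p : 'I_n).

Lemma theta_edge b m l : add_alternating b -> b (ord_lo m) (ord_hi m) != 0 ->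
  theta b m l = (b l (ord_lo m) - b l (ord_hi m)) / b (ord_lo m) (ord_hi m).
Proof.
move=> b_alt b_edge; rewrite /theta /smoothable_weight.
have [->|l_lo] /= := eqVneq l (ord_lo m).
  by rewrite alt_diag // sub0r mulNr divff.
have [->|l_hi] /= := eqVneq l (ord_hi m).
  by rewrite alt_diag // subr0 b_alt mulNr divff.
by rewrite (b_alt l) addrC.
Qed.

Lemma theta_ge0 b m l : smoothable b (ord_lo m) (ord_hi m) ->
  l != ord_lo m -> l != ord_hi m -> 0 <= theta b m l.
Proof.
move=> [_ coef_nat] l_lo l_hi; have [k coef_k] := coef_nat l l_lo l_hi.
by rewrite /theta /smoothable_weight (negbTE l_lo) (negbTE l_hi) coef_k ler0n.
Qed.

Lemma biresidue_ker_Delta lam b : biresidue_of lam b ->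
  forall y, \sum_p y p = 0 -> (forall l, mxv b y l = 0) -> forall p, y p = 0.
Proof.
move=> [_ [_ lam_b]] y y_sum by0 p.
pose z : 'cV[R[i]]_n := \col_q y q.
have z_Delta : in_Delta z by rewrite /in_Delta; under eq_bigr do rewrite mxE.
have bz0 : b *m z = 0.
  apply/matrixP => l j; rewrite !mxE -[RHS](by0 l).
  by apply: eq_bigr => q _; rewrite mxE.
have := (lam_b z z_Delta).2; rewrite bz0 mulmx0 => /matrixP/(_ p 0).
by rewrite !mxE.
Qed.

End Biresidue.

Theorem lemma5p3 (R : realType) (n : nat) (lam b : 'M[R[i]]_n)
    (I : {set 'I_n.-1}) :
  add_alternating lam -> normalized lam -> generic lam ->
  biresidue_of lam b ->
  (forall i, i \in I -> smoothable b (ord_lo i) (ord_hi i)) ->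
  forall (nu : 'I_n.-1 -> nat) (w : 'I_n -> int),
    (forall k, (w k)%:~R = \sum_(i in I) (nu i)%:R * theta b i k) ->
    ~ obstructed b w.
Proof.
move=> _ _ _ bres smooth nu w w_theta.
move=> [i [j [k [[ij jk ik] [[wi wj wk] [_ [c1 [c2 [c3 w_rows]]]]]]]]].
have [b_norm [b_alt _]] := bres.
pose x m := (nu m)%:R / b (ord_lo m) (ord_hi m).
have x_theta m l : m \in I ->
    x m * (b l (ord_lo m) - b l (ord_hi m)) = (nu m)%:R * theta b m l.
  move=> mI; have [b_edge _] := smooth m mI.
  by rewrite theta_edge // /x mulrAC -mulrA.
have W_w l : mxv b (chain I x) l = (w l)%:~R.
  by rewrite mxv_chain w_theta; apply: eq_bigr => m mI; exact: x_theta.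
have W_rows l : mxv b (chain I x) l = c1 * b i l + c2 * b j l + c3 * b k l.
  by rewrite W_w w_rows.
have [Wi Wj Wk] : [/\ mxv b (chain I x) i = -1, mxv b (chain I x) j = -1
    & mxv b (chain I x) k = -1] by rewrite !W_w wi wj wk.
have supp := rows3_preimage_support b_alt b_norm (biresidue_ker_Delta bres)
  (sum_chain I x) W_rows Wi Wj Wk.
have x_pos m l : m \in I -> l != ord_lo m -> l != ord_hi m ->
    0 <= x m * (b l (ord_lo m) - b l (ord_hi m)).
  move=> mI l_lo l_hi; rewrite x_theta //.
  by apply: mulr_ge0; [exact: ler0n | exact: theta_ge0 (smooth m mI) l_lo l_hi].
exact: chain_not_three_neg x_pos _ _ _ ij jk ik supp (And3 Wi Wj Wk).
Qed.
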